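(* For every integer $k\in\{4-n,\dots,n-1\}$ and every $t\ge 3$ (for cycles) or $t\ge 1$ (for paths): (a) $\left\lceil\frac{t(n+k-3)}{2}\right\rceil\le\gamma_k^o(K_n\times C_t)\le t\left\lceil\frac{n+k+1}{2}\right\rceil$; (b) $\left\lceil\frac{t(n+k-3)+2}{2}\right\rceil\le\gamma_k^o(K_n\times P_t)\le t\left\lceil\frac{n+k+1}{2}\right\rceil$.
   Context: Graphs are finite and simple; $K_n$ is the complete graph on $n$ vertices, $C_t$ the cycle and $P_t$ the path on $t$ vertices. In a graph $G=(V,E)$, for $S\subseteq V$ and $v\in V$, $\delta_S(v)$ is the number of neighbours of $v$ in $S$, $\overline{S}=V\setminus S$, and $\partial(S)$ the set of vertices of $\overline{S}$ with a neighbour in $S$. A nonempty $S$ is an offensive $k$-alliance if $\delta_S(v)\ge\delta_{\overline{S}}(v)+k$ for every $v\in\partial(S)$, and a global offensive $k$-alliance if moreover it is dominating; $\gamma_k^o(G)$ is the minimum cardinality of a global offensive $k$-alliance. The Cartesian product $G_1\times G_2$ has vertex set $V_1\times V_2$, with $(u,v)\sim(u',v')$ iff either $u=u'$ and $v\sim v'$, or $v=v'$ and $u\sim u'$. *)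

From mathcomp Require Import all_boot all_order all_algebra.
Set Implicit Arguments. Unset Strict Implicit. Unset Printing Implicit Defensive.
Import Order.TTheory GRing.Theory Num.Theory.

(* A finite simple graph: vertex finType T with adjacency relation e
   (symmetric, irreflexive for the concrete graphs below). *)
Section Alliances.
Variables (T : finType) (e : rel T).

Definition deg_in (S : {set T}) (v : T) : nat := #|[set u in S | e v u]|.

Definition boundary (S : {set T}) : {set T} :=
  [set v in ~: S | [exists u in S, e v u]].

Definition dominating (S : {set T}) : bool :=
  [forall v in ~: S, [exists u in S, e v u]].

Definition offensive_alliance (k : int) (S : {set T}) : bool :=
  (S != set0) &&
  [forall v in boundary S, ((deg_in (~: S) v)%:Z + k <= (deg_in S v)%:Z)%R].

Definition global_offensive_alliance (k : int) (S : {set T}) : bool :=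
  offensive_alliance k S && dominating S.

(* gamma_k^o : minimum cardinality of a global offensive k-alliance
   (convention: #|T| if none exists; irrelevant for the theorem, where
   the whole vertex set is such an alliance). *)
Definition gamma_off (k : int) : nat :=
  \big[minn/#|T|]_(S : {set T} | global_offensive_alliance k S) #|S|.
End Alliances.

Definition complete_rel (n : nat) : rel 'I_n := fun i j => i != j.
Definition cycle_rel (t : nat) : rel 'I_t :=
  fun i j => (val j == (val i).+1 %% t) || (val i == (val j).+1 %% t).
Definition path_rel (t : nat) : rel 'I_t :=
  fun i j => (val j == (val i).+1) || (val i == (val j).+1).

Definition cart_rel (T1 T2 : finType) (e1 : rel T1) (e2 : rel T2)
  : rel (T1 * T2) :=
  fun x y => ((x.1 == y.1) && e2 x.2 y.2) || ((x.2 == y.2) && e1 x.1 y.1).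

Definition ceil_half (a : int) : int := ((a + 1) %/ 2)%Z.
Arguments complete_rel n : clear implicits.
Arguments cycle_rel t : clear implicits.
Arguments path_rel t : clear implicits.

(* In K_n x G the vertex (i, j) has degree (n - 1) + deg_G j, and
   a member of S adjacent to (i, j) lies either in the copy of K_n through j
   (the column of j) or in the copy of G through i.  Hence if some (i, j) is
   outside a global offensive k-alliance S, the column of j contains at least
   (n - 1 + k - deg_G j) / 2 vertices of S; summing over the columns gives
   2 |S| >= t (n - 1 + k) - sum_j deg_G j, and the degree sum is 2t for C_t
   and 2(t - 1) for P_t.  Conversely, taking the first
   ceil((n + k + 1) / 2) rows of every column is a global offensive
   k-alliance as soon as G has maximum degree at most 2. *)
From mathcomp Require Import all_boot all_order all_algebra.
From mathcomp.zify Require Import zify.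
From mathcomp Require Import ring.
Import Order.TTheory GRing.Theory Num.Theory.

Set Implicit Arguments.
Unset Strict Implicit.
Unset Printing Implicit Defensive.

Lemma ceil_half_le (a b : int) : (a <= 2 * b)%R -> (ceil_half a <= b)%R.
Proof. by rewrite /ceil_half; lia. Qed.

Lemma card_ord_lt (n s : nat) : (s <= n)%N -> #|[set i : 'I_n | (i < s)%N]| = s.
Proof.
move=> le_sn.
have -> : [set i : 'I_n | (i < s)%N] = widen_ord le_sn @: [set: 'I_s].
  apply/setP => i; rewrite inE; apply/idP/imsetP => [lt_is|[i' _ ->]].
  - by exists (Ordinal lt_is) => //; apply: val_inj.
  - by rewrite /= ltn_ord.
by rewrite card_imset ?cardsT ?card_ord // => x y [] /val_inj.
Qed.

Section Alliance.
Variables (T : finType) (e : rel T).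

Definition degree (v : T) : nat := #|[set u | e v u]|.

Definition offensive_outside (k : int) (S : {set T}) : Prop :=
  forall v, v \notin S -> ((deg_in e (~: S) v)%:Z + k <= (deg_in e S v)%:Z)%R.

Lemma deg_in_addC (S : {set T}) (v : T) :
  (deg_in e S v + deg_in e (~: S) v)%N = degree v.
Proof.
rewrite /deg_in /degree -(cardsID S [set u | e v u]); congr (_ + _)%N.
  by apply: eq_card => u; rewrite !inE andbC.
by apply: eq_card => u; rewrite !inE andbC.
Qed.

Lemma global_offensive_alliance_outside (k : int) (S : {set T}) :
  global_offensive_alliance e k S -> offensive_outside k S.
Proof.
case/andP=> /andP[_ /forallP offS] /forallP domS v vNS.
have /implyP := offS v; apply; rewrite /boundary inE in_setC vNS /=.
by have := domS v; rewrite in_setC vNS.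
Qed.

Lemma gamma_off_le (k : int) (S : {set T}) :
  global_offensive_alliance e k S -> (gamma_off e k <= #|S|)%N.
Proof.
by move=> allS; rewrite /gamma_off -minEnat -leEnat; apply: bigmin_le_cond.
Qed.

(* The whole vertex set satisfies [offensive_outside] vacuously, which takes
   care of the default value [#|T|] of [gamma_off]. *)
Lemma gamma_off_ge (k B : int) :
  (forall S, offensive_outside k S -> (B <= #|S|%:Z)%R) ->
  (B <= (gamma_off e k)%:Z)%R.
Proof.
move=> geB; apply: (big_ind (fun m : nat => (B <= m%:Z)%R)).
- by rewrite -cardsT; apply: geB => v; rewrite inE.
- by move=> a b Ba Bb; rewrite /minn; case: ifP.
- by move=> S /global_offensive_alliance_outside/geB.
Qed.

End Alliance.

Section CartesianComplete.
Variables (n : nat) (T2 : finType) (e2 : rel T2).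
Local Notation V := ('I_n * T2)%type.
Local Notation e := (cart_rel (complete_rel n) e2).

Definition column (S : {set V}) (j : T2) : {set V} := [set u in S | u.2 == j].

Lemma card_column_sum (S : {set V}) : #|S| = (\sum_j #|column S j|)%N.
Proof.
rewrite -sum1_card (partition_big snd xpredT) //=.
by apply: eq_bigr => j _; rewrite -sum1_card; apply: eq_bigl => u; rewrite !inE.
Qed.

Lemma cart_degree (v : V) : degree e v = (n.-1 + degree e2 v.2)%N.
Proof.
rewrite /degree.
have -> : [set u | e v u] = (fun i => (i, v.2)) @: [set~ v.1] :|:
                           (fun j => (v.1, j)) @: [set j | e2 v.2 j].
  apply/setP => -[a b]; rewrite !inE /cart_rel /complete_rel /=.
  apply/idP/idP => [/orP[]/andP[/eqP <- vb]|/orP[]/imsetP[x]].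
  - by apply/orP; right; apply/imsetP; exists b; rewrite ?inE.
  - by apply/orP; left; apply/imsetP; exists a; rewrite ?inE 1?eq_sym.
  - by rewrite !inE => xv [-> ->]; rewrite eqxx eq_sym xv orbT.
  - by rewrite inE => vx [-> ->]; rewrite eqxx vx.
rewrite cardsU (_ : _ :&: _ = set0) ?cards0 ?subn0; last first.
  apply/setP => -[a b]; rewrite !inE; apply/negP.
  case/andP=> /imsetP[x xv [ax _]] /imsetP[y _ [av _]].
  by move: xv; rewrite !inE -ax av eqxx.
by rewrite !card_imset ?cardsC1 ?card_ord // => x y [].
Qed.

Lemma deg_in_cart_le (S : {set V}) (i : 'I_n) (j : T2) :
  (deg_in e S (i, j) <= #|column S j| + degree e2 j)%N.
Proof.
apply: leq_trans (_ : #|column S j :|: (pair i) @: [set j' | e2 j j']| <= _)%N.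
  apply: subset_leq_card; apply/subsetP => -[a b].
  rewrite !inE /cart_rel /complete_rel /= => /andP[Sab].
  case/orP=> /andP[/eqP eq_ab adj_ab]; subst.
  - by apply/orP; right; apply/imsetP; exists b; rewrite ?inE.
  - by rewrite Sab eqxx.
by rewrite cardsU card_imset ?leq_subr // => x y [].
Qed.

Lemma offensive_column_bound (k : int) (S : {set V}) (j : T2) :
  (k <= n%:Z + 1)%R -> offensive_outside e k S ->
  (n%:Z - 1 + k <= (2 * #|column S j| + degree e2 j)%:Z)%R.
Proof.
move=> le_kn offS.
have [i ijNS|full] := pickP [pred i : 'I_n | (i, j) \notin S].
  have := offS _ ijNS; have := deg_in_addC e S (i, j).
  have := deg_in_cart_le S i j; rewrite cart_degree /=.
  by case: i {ijNS} => /= i lt_in; lia.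
have : (n <= #|column S j|)%N.
  have inj_col : injective (fun i : 'I_n => (i, j)) by move=> x y [].
  rewrite -{1}(card_ord n) -cardsT -(card_imset _ inj_col).
  apply: subset_leq_card; apply/subsetP => _ /imsetP[i _ ->].
  by rewrite !inE eqxx andbT; have /negbFE := full i.
by lia.
Qed.

Lemma offensive_outside_card (k : int) (S : {set V}) :
  (k <= n%:Z + 1)%R -> offensive_outside e k S ->
  (#|T2|%:Z * (n%:Z - 1 + k) <= (2 * #|S| + \sum_j degree e2 j)%:Z)%R.
Proof.
move=> le_kn offS.
rewrite card_column_sum big_distrr -big_split /= -[X in (_ <= X)%R]natz natr_sum.
rewrite -[X in (X * _ <= _)%R]natz mulr_natl -sumr_const.
by apply: ler_sum => j _; rewrite natz; apply: offensive_column_bound.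
Qed.

Lemma gamma_off_cart_ge (k : int) (D : nat) :
  (k <= n%:Z + 1)%R -> (\sum_j degree e2 j <= D)%N ->
  (ceil_half (#|T2|%:Z * (n%:Z - 1 + k) - D%:Z) <= (gamma_off e k)%:Z)%R.
Proof.
move=> le_kn le_D; apply: gamma_off_ge => S /(offensive_outside_card le_kn).
move: (#|T2|%:Z * _)%R => m le_m; apply: ceil_half_le; move: le_m le_D.
move: (\sum_j degree e2 j)%N #|S| => d c; lia.
Qed.

Definition first_rows (s : nat) : {set V} := [set u : V | (u.1 < s)%N].

Lemma card_first_rows (s : nat) : (s <= n)%N -> #|first_rows s| = (s * #|T2|)%N.
Proof.
move=> le_sn; rewrite -{2}(card_ord_lt le_sn) -cardsT -cardsX.
by apply: eq_card => -[i j]; rewrite !inE andbT.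
Qed.

Lemma first_rows_deg_in (s : nat) (i : 'I_n) (j : T2) :
  (s <= n)%N -> (s <= i)%N -> (s <= deg_in e (first_rows s) (i, j))%N.
Proof.
move=> le_sn le_si; have inj_col : injective (fun i' : 'I_n => (i', j)) by move=> x y [].
rewrite -{1}(card_ord_lt le_sn) -(card_imset _ inj_col).
apply: subset_leq_card; apply/subsetP => _ /imsetP[i' lt_i's ->].
move: lt_i's; rewrite !inE /cart_rel /complete_rel /= eqxx => lt_i's.
by rewrite lt_i's /=; apply/orP; right; apply: contraTneq lt_i's => <-; rewrite -leqNgt.
Qed.

Lemma first_rows_alliance (k : int) (s : nat) :
  (0 < s <= n)%N -> (0 < #|T2|)%N -> (forall j, degree e2 j <= 2)%N ->
  (n%:Z + 1 + k <= 2 * s%:Z)%R -> global_offensive_alliance e k (first_rows s).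
Proof.
case/andP=> s_gt0 le_sn /card_gt0P[j0 _] deg_le2 le_k.
have n_gt0 : (0 < n)%N by apply: leq_trans le_sn.
have row0 (j : T2) : (Ordinal n_gt0, j) \in first_rows s by rewrite inE.
apply/andP; split; first (apply/andP; split).
- by apply/set0Pn; exists (Ordinal n_gt0, j0).
- apply/forallP => -[i j]; apply/implyP; rewrite !inE -leqNgt => /andP[le_si _].
  have := first_rows_deg_in j le_sn le_si; have := deg_le2 j.
  have := deg_in_addC e (first_rows s) (i, j); rewrite cart_degree /=.
  move: (deg_in _ _ _) (deg_in _ _ _) => a b; lia.
- apply/forallP => -[i j]; apply/implyP; rewrite !inE -leqNgt => le_si.
  apply/existsP; exists (Ordinal n_gt0, j); rewrite row0 /cart_rel /complete_rel /= eqxx /=.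
  by apply/orP; right; apply: contraTneq le_si => ->; rewrite -ltnNge.
Qed.

Lemma gamma_off_cart_le (k : int) :
  (0 < #|T2|)%N -> (forall j, degree e2 j <= 2)%N ->
  (0 <= n%:Z + k)%R -> (k <= n%:Z - 1)%R ->
  ((gamma_off e k)%:Z <= #|T2|%:Z * ceil_half (n%:Z + k + 1))%R.
Proof.
move=> T2_gt0 deg_le2 ge_k le_k.
have [s def_s] : exists s : nat, (ceil_half (n%:Z + k + 1) = s%:Z)%R.
  by exists (absz (ceil_half (n%:Z + k + 1))); rewrite gez0_abs // /ceil_half; lia.
have s_bounds : (0 < s <= n)%N by move: def_s; rewrite /ceil_half; lia.
have le_ks : (n%:Z + 1 + k <= 2 * s%:Z)%R by move: def_s; rewrite /ceil_half; lia.
have := gamma_off_le (first_rows_alliance s_bounds T2_gt0 deg_le2 le_ks).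
by rewrite card_first_rows ?(andP s_bounds).2 // def_s -PoszM mulnC lez_nat.
Qed.

End CartesianComplete.

Lemma cycle_degree_le2 (t : nat) (j : 'I_t) : (degree (cycle_rel t) j <= 2)%N.
Proof.
rewrite /degree; apply: leq_trans (_ : #|[set ordS j; ord_pred j]| <= 2)%N.
  apply: subset_leq_card; apply/subsetP => j'; rewrite !inE /cycle_rel.
  case/orP=> /eqP def_j.
  - by rewrite (_ : j' = ordS j) ?eqxx //; apply: val_inj.
  - by rewrite -(ordSK j') (_ : ordS j' = j) ?eqxx ?orbT //; apply: val_inj.
by rewrite cards2 ltnS leq_b1.
Qed.

Lemma sum_cycle_degree_le (t : nat) :
  (\sum_(j < t) degree (cycle_rel t) j <= 2 * t)%N.
Proof.
rewrite -[X in (_ <= 2 * X)%N](card_ord t) mulnC -sum_nat_const.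
by apply: leq_sum => j _; apply: cycle_degree_le2.
Qed.

Lemma card_ord_val_eq (t m : nat) : #|[set j : 'I_t | val j == m]| = (m < t).
Proof.
case: ltnP => [lt_mt|le_tm].
  by rewrite /= -(cards1 (Ordinal lt_mt)); apply: eq_card => j; rewrite !inE -val_eqE.
apply/eqP; rewrite cards_eq0; apply/eqP/setP => j; rewrite !inE.
by apply/negbTE; apply: contraTneq le_tm => <-; rewrite -ltnNge ltn_ord.
Qed.

Lemma path_degree_le (t : nat) (j : 'I_t) :
  (degree (path_rel t) j <= (0 < j) + (j.+1 < t))%N.
Proof.
rewrite /degree; case: j => -[|i] lt_jt /=.
  rewrite -card_ord_val_eq; apply: subset_leq_card; apply/subsetP => j'.
  by rewrite !inE /path_rel /=; case/orP.
pose near := [set j' : 'I_t | val j' == i] :|: [set j' : 'I_t | val j' == i.+2].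
apply: leq_trans (_ : #|near| <= _)%N.
  apply: subset_leq_card; apply/subsetP => j'.
  by rewrite !inE /path_rel /= eqSS orbC (eq_sym i).
by rewrite (leq_trans (leq_card_setU _ _)) // !card_ord_val_eq leq_add ?leq_b1.
Qed.

Lemma path_degree_le2 (t : nat) (j : 'I_t) : (degree (path_rel t) j <= 2)%N.
Proof. exact: leq_trans (path_degree_le j) (leq_add (leq_b1 _) (leq_b1 _)). Qed.

Lemma sum_path_degree_le (t : nat) :
  (\sum_(j < t) degree (path_rel t) j <= 2 * t.-1)%N.
Proof.
apply: (@leq_trans (\sum_(j < t) ((0 < j) + (j.+1 < t))%N)).
  by apply: leq_sum => j _; apply: path_degree_le.
case: t => [|t]; first by rewrite big_ord0.
rewrite big_split /= big_ord_recl big_ord_recr /= ltnn.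
rewrite [in X in (_ + X <= _)%N](eq_bigr (fun _ => 1%N)) => [|i _]; last first.
  by rewrite /= ltnS ltn_ord.
by rewrite !sum1_card card_ord; lia.
Qed.

Theorem mainTheorem16 (n : nat) (k : int) :
  (4%:Z - n%:Z <= k)%R -> (k <= n%:Z - 1)%R ->
  (forall t : nat, (3 <= t)%N ->
     (ceil_half (t%:Z * (n%:Z + k - 3)) <=
        (gamma_off (cart_rel (complete_rel n) (cycle_rel t)) k)%:Z)%R /\
     ((gamma_off (cart_rel (complete_rel n) (cycle_rel t)) k)%:Z <=
        t%:Z * ceil_half (n%:Z + k + 1))%R) /\
  (forall t : nat, (1 <= t)%N ->
     (ceil_half (t%:Z * (n%:Z + k - 3) + 2) <=
        (gamma_off (cart_rel (complete_rel n) (path_rel t)) k)%:Z)%R /\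
     ((gamma_off (cart_rel (complete_rel n) (path_rel t)) k)%:Z <=
        t%:Z * ceil_half (n%:Z + k + 1))%R).
Proof.
move=> ge_k le_k; have le_kn : (k <= n%:Z + 1)%R by lia.
have ge_kn : (0 <= n%:Z + k)%R by lia.
have shift (t : nat) : (t%:Z * (n%:Z - 1 + k) = t%:Z * (n%:Z + k - 3) + 2 * t%:Z)%R.
  by ring.
split=> t t_gt0; split.
- have := gamma_off_cart_ge le_kn (sum_cycle_degree_le t).
  by rewrite card_ord shift PoszM addrK.
- have ord_gt0 : (0 < #|'I_t|)%N by rewrite card_ord; apply: leq_trans t_gt0.
  by have := gamma_off_cart_le ord_gt0 (@cycle_degree_le2 t) ge_kn le_k; rewrite card_ord.
- have := gamma_off_cart_ge le_kn (sum_path_degree_le t).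
  rewrite card_ord shift; move: (t%:Z * _)%R => m.
  by rewrite (_ : m + 2 * t%:Z - (2 * t.-1)%N%:Z = m + 2)%R //; lia.
- have ord_gt0 : (0 < #|'I_t|)%N by rewrite card_ord.
  by have := gamma_off_cart_le ord_gt0 (@path_degree_le2 t) ge_kn le_k; rewrite card_ord.
Qed.
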